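(* Let $\mathcal{H},\mathcal{K}$ be finite-dimensional Hilbert spaces and $\Gamma:\mathcal{B}(\mathcal{H})\to\mathcal{B}(\mathcal{K})$ a completely positive trace-preserving map. Suppose there exist a completely positive map $\mathcal{F}:\mathcal{B}(\mathcal{H})\to\mathcal{B}(\mathcal{K})$ and a real number $\epsilon>0$ such that for every density operator $\rho$ on $\mathcal{H}$, $\epsilon\le\operatorname{tr}[\mathcal{F}(\rho)]$ and $\mathcal{F}(\rho)=\operatorname{tr}[\mathcal{F}(\rho)]\,\Gamma(\rho)$. Then either $\Gamma(\cdot)=\rho'\operatorname{tr}[\cdot]$ for some density operator $\rho'$ on $\mathcal{K}$, or $\Gamma=\mathcal{F}/p$ for some positive number $p$. *)

(* Scalars: an arbitrary numClosedFieldType C (e.g. algC, or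
   complex R = R[i] for a real closed field R); the complex numbers are an instance. *)
From HB Require Import structures.
From mathcomp Require Import all_boot all_order all_algebra.
From mathcomp Require Import mxtens.
Set Implicit Arguments. Unset Strict Implicit. Unset Printing Implicit Defensive.
Import Order.TTheory GRing.Theory Num.Theory.
Local Open Scope ring_scope.

Section Quantum.
Variable C : numClosedFieldType.

Definition psd n (A : 'M[C]_n) : Prop :=
  forall v : 'cV[C]_n, 0 <= (((map_mx Num.conj v)^T *m A *m v) 0 0).

Definition density n (A : 'M[C]_n) : Prop := psd A /\ \tr A = 1.

(* Ampliation id_k (x) Phi acting on B(C^k (x) C^n) = 'M_(k*n). *)
Definition ampl k n m (Phi : 'M[C]_n -> 'M[C]_m) (X : 'M[C]_(k * n)) : 'M[C]_(k * m) :=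
  \matrix_(i, j)
    Phi (\matrix_(a, b) X (mxtens_index ((mxtens_unindex i).1, a))
                          (mxtens_index ((mxtens_unindex j).1, b)))
        (mxtens_unindex i).2 (mxtens_unindex j).2.

Definition completely_positive n m (Phi : 'M[C]_n -> 'M[C]_m) : Prop :=
  forall k (X : 'M[C]_(k * n)), psd X -> psd (@ampl k n m Phi X).

Definition trace_preserving n m (Phi : 'M[C]_n -> 'M[C]_m) : Prop :=
  forall X, \tr (Phi X) = \tr X.

End Quantum.

(* On two states r1, r2 and their midpoint, the relation F = tr F * Gamma forces
   (tr F r1 - tr F r2) (Gamma r1 - Gamma r2) = 0, so every pair of states has equal
   tr F or equal image under Gamma.  Two equivalence relations whose union relates
   all pairs cannot both be nontrivial, hence either tr F is a constant p >= eps on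
   states and Gamma = F / p there, or Gamma maps every state to a single state rho'.
   Both conclusions extend from states to all matrices because density matrices
   span M_n: every psd matrix is a multiple of a state up to adding a state, and
   polarisation over e_i + c e_j with c in {0, 1, i} recovers the matrix units. *)

From HB Require Import structures.
From mathcomp Require Import all_boot all_order all_algebra mxtens.
From Stdlib Require Import Classical.
Import Order.TTheory GRing.Theory Num.Theory.
Set Implicit Arguments. Unset Strict Implicit. Unset Printing Implicit Defensive.
Local Open Scope ring_scope.

Section PositiveMatrices.
Variable C : numClosedFieldType.

Lemma psdD n (A B : 'M[C]_n) : psd A -> psd B -> psd (A + B).
Proof. by move=> psdA psdB v; rewrite mulmxDr mulmxDl mxE addr_ge0. Qed.

Lemma psdZ n (c : C) (A : 'M[C]_n) : 0 <= c -> psd A -> psd (c *: A).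
Proof. by move=> c_ge0 psdA v; rewrite -scalemxAr -scalemxAl mxE mulr_ge0. Qed.

Lemma conj_delta_mx n p (i : 'I_n) (j : 'I_p) :
  map_mx Num.conj (delta_mx i j : 'M[C]_(n, p)) = delta_mx i j.
Proof. by apply/matrixP=> a b; rewrite !mxE; case: (_ && _); rewrite ?conjC1 ?conjC0. Qed.

Lemma psd_diag_ge0 n (A : 'M[C]_n) i : psd A -> 0 <= A i i.
Proof.
by move=> /(_ (delta_mx i 0)); rewrite conj_delta_mx trmx_delta -rowE -colE !mxE.
Qed.

Lemma psd_tr_ge0 n (A : 'M[C]_n) : psd A -> 0 <= \tr A.
Proof. by move=> psdA; apply: sumr_ge0 => i _; apply: psd_diag_ge0. Qed.

Lemma psd_outer n (u : 'cV[C]_n) : psd (u *m (map_mx Num.conj u)^T).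
Proof.
move=> v; rewrite mulmxA -mulmxA mxE big_ord1.
set a := ((map_mx Num.conj v)^T *m u) 0 0.
have -> : ((map_mx Num.conj u)^T *m v) 0 0 = a^*.
  rewrite /a !mxE rmorph_sum; apply: eq_bigr => i _.
  by rewrite !mxE rmorphM /= conjCK mulrC.
exact: mul_conjC_ge0.
Qed.

Lemma quad_form_sum n (A : 'M[C]_n) (v : 'cV[C]_n) :
  ((map_mx Num.conj v)^T *m A *m v) 0 0 = \sum_i \sum_j (v i 0)^* * A i j * v j 0.
Proof.
rewrite mxE exchange_big; apply: eq_bigr => j _.
by rewrite mxE big_distrl; apply: eq_bigr => i _; rewrite !mxE.
Qed.

Lemma psd_reindex k n (g : 'I_k -> 'I_n) (Z : 'M[C]_n) :
  bijective g -> psd Z -> psd (\matrix_(i, j) Z (g i) (g j)).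
Proof.
case=> h gK hK psdZ v; have := psdZ (\col_a v (h a) 0).
have h_bij : {on [pred i | true], bijective h} by apply: onW_bij; exists g.
rewrite !quad_form_sum (reindex h h_bij); congr (0 <= _); apply: eq_bigr => a _.
by rewrite (reindex h h_bij); apply: eq_bigr => b _; rewrite !mxE !hK.
Qed.

Lemma density_delta n (i : 'I_n) : density (delta_mx i i : 'M[C]_n).
Proof.
split; last first.
  by rewrite -(@mul_delta_mx _ _ 1 _ 0) mxtrace_mulC mul_delta_mx /mxtrace big_ord1 mxE.
by have := psd_outer (delta_mx i 0 : 'cV[C]_n); rewrite conj_delta_mx trmx_delta mul_delta_mx.
Qed.

Lemma density_normalize n (A : 'M[C]_n) :
  psd A -> 0 < \tr A -> density ((\tr A)^-1 *: A).
Proof.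
move=> psdA trA_gt0; split; last by rewrite mxtraceZ mulVf ?gt_eqF.
by apply: psdZ; rewrite ?invr_ge0 ?ltW.
Qed.

Lemma density_midpoint n (r1 r2 : 'M[C]_n) :
  density r1 -> density r2 -> density (2^-1 *: (r1 + r2)).
Proof.
move=> [psd1 tr1] [psd2 tr2]; have -> : 2^-1 = (\tr (r1 + r2))^-1.
  by rewrite mxtraceD tr1 tr2.
by apply: density_normalize; [exact: psdD | rewrite mxtraceD tr1 tr2 addr_gt0 ?ltr01].
Qed.

Lemma completely_positive_psd n m (Phi : 'M[C]_n -> 'M[C]_m) (Y : 'M[C]_n) :
  completely_positive Phi -> psd Y -> psd (Phi Y).
Proof.
(* For k = 1 the ampliation is Phi itself up to reindexing 'I_(1 * p) by 'I_p;
   1 * p is not convertible to p. *)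
pose drop1 p (i : 'I_(1 * p)) : 'I_p := (mxtens_unindex i).2.
have drop1_bij p : bijective (@drop1 p).
  exists (fun a => mxtens_index (ord0, a)) => [i|a]; rewrite /drop1.
    by rewrite -[RHS]mxtens_unindexK; case: (mxtens_unindex i) => x a; rewrite (ord1 x).
  by rewrite mxtens_indexK.
move=> cpPhi psdY; have := cpPhi 1 _ (psd_reindex (drop1_bij n) psdY).
set Y1 := ampl _ _; have -> : Y1 = \matrix_(i, j) Phi Y (drop1 m i) (drop1 m j).
  apply/matrixP=> i j; rewrite !mxE; congr (Phi _ _ _).
  by apply/matrixP=> a b; rewrite !mxE /drop1 !mxtens_indexK.
case: (drop1_bij m) => h dK hK /(psd_reindex (Bijective hK dK)).
by congr psd; apply/matrixP=> a b; rewrite !mxE !hK.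
Qed.

End PositiveMatrices.

Section DensitySpan.
Variables (C : numClosedFieldType) (n : nat) (V : lmodType C) (L : 'M[C]_n -> V).
Hypotheses (L_linear : linear L) (L_density : forall rho, density rho -> L rho = 0).

HB.instance Definition _ := GRing.isLinear.Build C 'M[C]_n V *:%R L L_linear.

Lemma linear_psd_eq0 (i : 'I_n) (A : 'M[C]_n) : psd A -> L A = 0.
Proof.
move=> psdA; have [psdE trE] := density_delta C i.
set E := delta_mx i i in psdE trE *.
have trAE_gt0 : 0 < \tr (A + E) by rewrite mxtraceD trE ltr_wpDl ?psd_tr_ge0 ?ltr01.
have LAE : L (A + E) = 0.
  rewrite -[A + E]scale1r -(divff (lt0r_neq0 trAE_gt0)) -scalerA linearZ.
  by rewrite /= L_density ?scaler0 //; apply: density_normalize => //; apply: psdD.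
by move: LAE; rewrite linearD /= (L_density (density_delta C i)) addr0.
Qed.

Lemma linear_polar_delta (i j : 'I_n) (c : C) :
  L (delta_mx i i) + c^* *: L (delta_mx i j) + c *: L (delta_mx j i)
  + (c * c^*) *: L (delta_mx j j) = 0.
Proof.
set u : 'cV[C]_n := delta_mx i 0 + c *: delta_mx j 0.
have u_adj : (map_mx Num.conj u)^T = delta_mx 0 i + c^* *: delta_mx 0 j.
  apply/matrixP=> a b; rewrite !mxE rmorphD rmorphM /=.
  by rewrite !(andbC (a == 0)) !rmorph_nat.
have := linear_psd_eq0 i (psd_outer u).
rewrite u_adj mulmxDl !mulmxDr -!scalemxAl -!scalemxAr !mul_delta_mx.
by rewrite scalerA !linearD !linearZ /= !addrA.
Qed.

Lemma linear_delta_eq0 (i j : 'I_n) : L (delta_mx i j) = 0.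
Proof.
have Lii k : L (delta_mx k k) = 0.
  by have := linear_polar_delta k k 0; rewrite conjC0 mul0r !scale0r !addr0.
have := linear_polar_delta i j 1; have := linear_polar_delta i j 'i.
rewrite !Lii conjC1 conjCi !scale1r !scaler0 !add0r !addr0.
set x := L (delta_mx i j); set y := L (delta_mx j i) => sum_i sum_1.
have : x *+ 2 = (x + y) + 'i *: (- 'i *: x + 'i *: y).
  by rewrite scalerDr !scalerA mulrN -expr2 sqrCi opprK scaleN1r !scale1r addrACA subrr addr0.
by rewrite sum_1 sum_i scaler0 addr0 -scaler_nat => /eqP; rewrite scaler_eq0 pnatr_eq0 => /eqP.
Qed.

Lemma linear_eq0_of_density (X : 'M[C]_n) : L X = 0.
Proof.
rewrite (matrix_sum_delta X) linear_sum big1 // => i _.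
by rewrite linear_sum big1 // => j _; rewrite linearZ /= linear_delta_eq0 scaler0.
Qed.

End DensitySpan.

Lemma linear_eq_on_density (C : numClosedFieldType) n (V : lmodType C)
  (f g : 'M[C]_n -> V) : linear f -> linear g ->
  (forall rho, density rho -> f rho = g rho) -> f =1 g.
Proof.
move=> f_lin g_lin fg_density X; apply/subr0_eq; move: X.
apply: (linear_eq0_of_density (L := fun X => f X - g X)) => [a X Y | rho /fg_density ->].
  by rewrite f_lin g_lin scalerBr addrACA opprD.
by rewrite subrr.
Qed.

Lemma scaler_cross_eq (K : fieldType) (V : lmodType K) (a b : K) (x y : V) :
  (a + b) *: (x + y) = (a *: x + b *: y) *+ 2 -> a = b \/ x = y.
Proof.
have -> : (a + b) *: (x + y) = (a *: x + b *: y) + (a *: y + b *: x).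
  by rewrite scalerDl !scalerDr [b *: x + _]addrC addrACA.
rewrite mulr2n => /addrI cross_eq.
have : (a - b) *: (x - y) = 0.
  by rewrite scalerBl !scalerBr opprB addrACA -opprD cross_eq subrr.
by move/eqP; rewrite scaler_eq0 !subr_eq0 => /orP[/eqP|/eqP]; [left|right].
Qed.

Lemma const_on_or_const_on (T U W : Type) (P : T -> Prop) (f : T -> U) (g : T -> W) :
  (forall x y, P x -> P y -> f x = f y \/ g x = g y) ->
  (forall x y, P x -> P y -> f x = f y) \/ (forall x y, P x -> P y -> g x = g y).
Proof.
move=> fg; have [|f_nconst] := classic (forall x y, P x -> P y -> f x = f y).
  by left.
right.
have [a [b [Pa Pb fab]]] : exists a b, [/\ P a, P b & f a <> f b].
  apply: NNPP => none; apply: f_nconst => x y Px Py.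
  by apply: NNPP => fxy; apply: none; exists x, y.
have gab : g a = g b by case: (fg a b Pa Pb).
have g_a x : P x -> g x = g a.
  move=> Px; case: (fg x a Px Pa) => [fxa|//]; rewrite gab.
  by case: (fg x b Px Pb) => // fxb; case: fab; rewrite -fxa fxb.
by move=> x y Px Py; rewrite !g_a.
Qed.

Lemma tr_eq_or_image_eq (C : numClosedFieldType) n m
  (Gamma F : {linear 'M[C]_n -> 'M[C]_m}) :
  (forall rho, density rho -> F rho = \tr (F rho) *: Gamma rho) ->
  forall r1 r2, density r1 -> density r2 ->
  \tr (F r1) = \tr (F r2) \/ Gamma r1 = Gamma r2.
Proof.
move=> F_Gamma r1 r2 r1_density r2_density; apply: scaler_cross_eq.
have two_neq0 : (2 : C) != 0 by rewrite pnatr_eq0.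
have F_mid := F_Gamma _ (density_midpoint r1_density r2_density).
rewrite !linearZ !linearD /= -scalerDr in F_mid.
move/(scalerI (invr_neq0 two_neq0)): F_mid => F_sum.
by rewrite -!F_Gamma // F_sum -scaler_nat scalerA mulrA divff ?mul1r.
Qed.

Theorem lemma3 (C : numClosedFieldType) (n m : nat)
  (Gamma F : {linear 'M[C]_n -> 'M[C]_m}) (eps : C) :
  completely_positive Gamma -> trace_preserving Gamma ->
  completely_positive F -> 0 < eps ->
  (forall rho : 'M[C]_n, density rho ->
     eps <= \tr (F rho) /\ F rho = \tr (F rho) *: Gamma rho) ->
  (exists rho' : 'M[C]_m, density rho' /\ forall X, Gamma X = \tr X *: rho')
  \/ (exists p : C, 0 < p /\ forall X, Gamma X = p^-1 *: F X).
Proof.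
case: n Gamma F => [|n] Gamma F Gamma_cp Gamma_tp _ eps_gt0 hF.
  by right; exists 1; split=> // X; rewrite invr1 scale1r (flatmx0 X) !linear0.
have F_Gamma rho (rho_density : density rho) := (hF rho rho_density).2.
have r0_density := density_delta C (0 : 'I_n.+1); set r0 := delta_mx 0 0 in r0_density.
case: (const_on_or_const_on (tr_eq_or_image_eq F_Gamma)) => [trF_const | Gamma_const].
- have p_gt0 : 0 < \tr (F r0) := lt_le_trans eps_gt0 (hF r0 r0_density).1.
  right; exists (\tr (F r0)); split=> //.
  apply: linear_eq_on_density (linearP Gamma) (linearP (_ \*: F)) _ => rho rho_density.
  by rewrite /= (F_Gamma rho) // (trF_const rho r0) // scalerA mulVf ?lt0r_neq0 ?scale1r.
- left; exists (Gamma r0); split.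
    by split; [exact: completely_positive_psd r0_density.1 | rewrite Gamma_tp r0_density.2].
  apply: linear_eq_on_density (linearP Gamma) _ _ => [a X Y | rho rho_density].
    by rewrite mxtraceD mxtraceZ scalerDl scalerA.
  by rewrite rho_density.2 scale1r (Gamma_const rho r0).
Qed.
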